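(* Let $\Gamma$ be an antipodal tight graph $\mathrm{AT}4(p,q,2)$ with vertex set $X$, and let $x\in X$. Let $W$ and $W'$ be irreducible $T(x)$-modules with endpoint $2$; each is a one-dimensional subspace of $E^*_2(x)V$ spanned by an eigenvector of $E^*_2(x)AE^*_2(x)$, and let $\eta$ and $\eta'$ be the corresponding eigenvalues. Then $W$ and $W'$ are isomorphic as $T(x)$-modules if and only if $\eta=\eta'$.
   Context: For integers $p\ge 1$, $q\ge 2$, an $\mathrm{AT}4(p,q,2)$ is a non-bipartite distance-regular antipodal double cover of diameter $4$ with intersection array $\{q(pq+p+q),\,(q^2-1)(p+1),\,q(p+q)/2,\,1;\ 1,\,q(p+q)/2,\,(q^2-1)(p+1),\,q(pq+p+q)\}$; such a graph is tight and $Q$-polynomial. Let $A$ be the adjacency matrix, $\partial$ the distance, $V=\mathbb{C}^X$, and for $0\le i\le 4$ let $E^*_i(x)$ be the diagonal matrix with $(E^*_i(x))_{yy}=1$ if $\partial(x,y)=i$ and $0$ otherwise. $T(x)$ is the subalgebra of $\mathrm{Mat}_X(\mathbb{C})$ generated by $A,E^*_0(x),\dots,E^*_4(x)$. An irreducible $T(x)$-module is a nonzero $T(x)$-invariant subspace of $V$ with no invariant subspaces other than $0$ and itself; its endpoint is $\min\{i:E^*_i(x)W\neq0\}$. Two $T(x)$-modules $W,W'$ are isomorphic if there is a linear bijection $\sigma:W\to W'$ with $\sigma Bw=B\sigma w$ for all $B\in T(x)$, $w\in W$. *)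

From HB Require Import structures.
From mathcomp Require Import all_boot all_order all_algebra all_field.
From mathcomp Require Import complex.
From mathcomp Require Import Rstruct.
Set Implicit Arguments. Unset Strict Implicit. Unset Printing Implicit Defensive.
Import Order.TTheory GRing.Theory Num.Theory.
Local Open Scope ring_scope.

Definition Cplx : numClosedFieldType := complex Rdefinitions.R.

Fixpoint ball (X : finType) (e : rel X) (n : nat) (x : X) : {set X} :=
  if n is m.+1 then ball e m x :|: [set y | [exists z in ball e m x, e z y]]
  else [set x].

Definition dist_eq (X : finType) (e : rel X) (i : nat) (x y : X) : bool :=
  (y \in ball e i x) && (if i is m.+1 then y \notin ball e m x else true).

Definition nbrs_at (X : finType) (e : rel X) (x y : X) (j : nat) : {set X} :=
  [set z | e y z & dist_eq e j x z].

(* Gamma = (X, e) is a (connected, simple) distance-regular graph of diameter 4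
   with intersection array
   {q(pq+p+q), (q^2-1)(p+1), q(p+q)/2, 1 ; 1, q(p+q)/2, (q^2-1)(p+1), q(pq+p+q)},
   i.e. an AT4(p,q,2) (p >= 1, q >= 2).  The entry q(p+q)/2 is encoded exactly
   by  2 * c = q(p+q). *)
Definition is_AT4_pq2 (X : finType) (e : rel X) (p q : nat) : Prop :=
  [/\ (1 <= p)%N /\ (2 <= q)%N, symmetric e, irreflexive e,
      (forall x y : X, exists i, (i <= 4)%N /\ dist_eq e i x y) &
      (forall x y : X,
        [/\ dist_eq e 0 x y -> #|nbrs_at e x y 1| = (q * (p * q + p + q))%N,
            dist_eq e 1 x y -> #|nbrs_at e x y 0| = 1%N /\
                               #|nbrs_at e x y 2| = ((q ^ 2 - 1) * (p + 1))%N,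
            dist_eq e 2 x y -> (2 * #|nbrs_at e x y 1| = q * (p + q))%N /\
                               (2 * #|nbrs_at e x y 3| = q * (p + q))%N,
            dist_eq e 3 x y -> #|nbrs_at e x y 2| = ((q ^ 2 - 1) * (p + 1))%N /\
                               #|nbrs_at e x y 4| = 1%N &
            dist_eq e 4 x y -> #|nbrs_at e x y 3| = (q * (p * q + p + q))%N])].

(* V = C^X, identified with column vectors indexed by 'I_#|X| via enum_val. *)
Definition adjmx (X : finType) (e : rel X) : 'M[Cplx]_#|X| :=
  \matrix_(i, j) (e (enum_val i) (enum_val j))%:R.

Definition dualidem (X : finType) (e : rel X) (x : X) (i : nat) : 'M[Cplx]_#|X| :=
  \matrix_(j, k) ((j == k) && dist_eq e i x (enum_val j))%:R.

Definition in_Terwilliger (X : finType) (e : rel X) (x : X) (B : 'M[Cplx]_#|X|) : Prop :=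
  forall P : 'M[Cplx]_#|X| -> Prop,
    P (adjmx e) ->
    (forall i, (i <= 4)%N -> P (dualidem e x i)) ->
    P 1%:M ->
    (forall M N, P M -> P N -> P (M + N)) ->
    (forall (a : Cplx) M, P M -> P (a *: M)) ->
    (forall M N, P M -> P N -> P (M *m N)) ->
    P B.

Definition is_Tmodule (X : finType) (e : rel X) (x : X)
    (W : {vspace 'cV[Cplx]_#|X|}) : Prop :=
  forall B, in_Terwilliger e x B -> forall w, w \in W -> B *m w \in W.

Definition irreducible_Tmodule (X : finType) (e : rel X) (x : X)
    (W : {vspace 'cV[Cplx]_#|X|}) : Prop :=
  [/\ is_Tmodule e x W, W != 0%VS &
      forall U : {vspace 'cV[Cplx]_#|X|},
        is_Tmodule e x U -> (U <= W)%VS -> U = 0%VS \/ U = W].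

Definition has_endpoint (X : finType) (e : rel X) (x : X)
    (W : {vspace 'cV[Cplx]_#|X|}) (r : nat) : Prop :=
  (forall i, (i < r)%N -> forall w, w \in W -> dualidem e x i *m w = 0) /\
  exists2 w, w \in W & dualidem e x r *m w != 0.

Definition Tmodule_iso (X : finType) (e : rel X) (x : X)
    (W W' : {vspace 'cV[Cplx]_#|X|}) : Prop :=
  exists sigma : 'cV[Cplx]_#|X| -> 'cV[Cplx]_#|X|,
    [/\ {in W &, forall u v, sigma (u + v) = sigma u + sigma v},
        forall a : Cplx, {in W, forall u, sigma (a *: u) = a *: sigma u},
        {in W, forall u, sigma u \in W'},
        {in W &, injective sigma} /\
          (forall v, v \in W' -> exists2 u, u \in W & sigma u = v) &
        forall B, in_Terwilliger e x B ->
          {in W, forall u, sigma (B *m u) = B *m sigma u}].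

From HB Require Import structures.
From mathcomp Require Import all_boot all_order all_algebra all_field.
Import GRing.Theory Num.Theory.
Local Open Scope ring_scope.

(* A one-dimensional T(x)-module W = <[w]> with endpoint 2 is fixed by E*_2(x)
   (E*_2(x) acts on W by a nonzero scalar, which must be 1 by idempotence), so
   E*_2 A E*_2 w = A w and w is an eigenvector of A with eigenvalue eta, while
   E*_i(x) w = 0 for i <> 2.  Every generator of T(x) then acts on W by a scalar
   depending on eta alone, hence so does every element of T(x): the lines
   <[w]> and <[w']> are isomorphic through w |-> w' as soon as eta = eta'.
   Conversely an isomorphism commutes with A and so preserves its eigenvalue. *)

Lemma scalerIv {F : fieldType} {V : lmodType F} {v : V} :
  v != 0 -> injective ( *:%R^~ v : F -> V).
Proof.
move=> nz_v c d /eqP; rewrite -subr_eq0 -scalerBl scaler_eq0 (negbTE nz_v).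
by rewrite orbF subr_eq0 => /eqP.
Qed.

Section Terwilliger.

Context {X : finType} {e : rel X} {x : X}.

Lemma ball_mono {m n} : (m <= n)%N -> ball e m x \subset ball e n x.
Proof.
move=> /subnK <-; elim: (n - m)%N => [|k IH] //=.
exact: subset_trans IH (subsetUl _ _).
Qed.

Lemma dist_eq_uniq i j y : dist_eq e i x y -> dist_eq e j x y -> i = j.
Proof.
wlog le_ij : i j / (i <= j)%N => [hwlog|].
  by case: (leqP i j) => [|/ltnW] le Hi Hj; [|symmetry]; exact: hwlog.
move: le_ij; rewrite leq_eqVlt => /orP[/eqP // | lt_ij] /andP[yi _].
case: j lt_ij => // j lt_ij /andP[_].
by rewrite (subsetP (ball_mono (ltnSE lt_ij)) _ yi).
Qed.

Lemma dualidem_diag i :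
  dualidem e x i = diag_mx (\row_k (dist_eq e i x (enum_val k))%:R).
Proof. by apply/matrixP=> a b; rewrite !mxE; case: (a == b); rewrite ?mulr1n. Qed.

Lemma dualidemM i j :
  dualidem e x i *m dualidem e x j = if i == j then dualidem e x i else 0.
Proof.
rewrite !dualidem_diag mulmx_diag; have [<- | nij] := eqVneq i j.
  by congr diag_mx; apply/rowP=> a; rewrite !mxE -natrM mulnb andbb.
apply/matrixP=> a b; rewrite !mxE -natrM mulnb.
case Hi: (dist_eq e i x _); case Hj: (dist_eq e j x _); rewrite ?mul0rn //.
by case/eqP: nij; exact: dist_eq_uniq Hi Hj.
Qed.

Lemma adjmx_Terwilliger : in_Terwilliger e x (adjmx e).
Proof. by move=> P. Qed.

Lemma dualidem_Terwilliger i : (i <= 4)%N -> in_Terwilliger e x (dualidem e x i).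
Proof. by move=> le_i4 P _ PE *; exact: PE. Qed.

Lemma Tmodule_line_eigen {w : 'cV[Cplx]_#|X|} {B} :
  is_Tmodule e x <[w]> -> in_Terwilliger e x B -> exists c, B *m w = c *: w.
Proof. by move=> Tw TB; apply/vlineP/Tw/memv_line. Qed.

Lemma endpoint2_line_dualidem {w : 'cV[Cplx]_#|X|} :
  is_Tmodule e x <[w]> -> has_endpoint e x <[w]> 2 -> w != 0 ->
  dualidem e x 2 *m w = w.
Proof.
move=> Tw [_ [u /vlineP[k ->] E2u]] nz_w.
have [c E2w] := Tmodule_line_eigen Tw (dualidem_Terwilliger 2 isT).
have nz_c : c != 0.
  by apply: contraNneq E2u => c0; rewrite -scalemxAr E2w c0 scale0r scaler0.
suff c1 : c = 1 by rewrite E2w c1 scale1r.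
apply: (mulfI nz_c); rewrite mulr1; apply/(scalerIv nz_w) => /=.
by rewrite -scalerA -E2w scalemxAr -E2w mulmxA dualidemM.
Qed.

Lemma endpoint2_line_adj_eigen {w : 'cV[Cplx]_#|X|} {eta} :
  is_Tmodule e x <[w]> -> has_endpoint e x <[w]> 2 -> w != 0 ->
  dualidem e x 2 *m adjmx e *m dualidem e x 2 *m w = eta *: w ->
  adjmx e *m w = eta *: w.
Proof.
move=> Tw endw nz_w; have E2w := endpoint2_line_dualidem Tw endw nz_w.
have [a Aw] := Tmodule_line_eigen Tw adjmx_Terwilliger.
by rewrite -!mulmxA E2w Aw -scalemxAr E2w => /(scalerIv nz_w) <-.
Qed.

Section CommonEigenvector.

Context {w w' : 'cV[Cplx]_#|X|} {eta : Cplx}.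
Hypotheses (E2w : dualidem e x 2 *m w = w) (E2w' : dualidem e x 2 *m w' = w').
Hypotheses (Aw : adjmx e *m w = eta *: w) (Aw' : adjmx e *m w' = eta *: w').

Lemma dualidem_common_eigen i :
  exists b, dualidem e x i *m w = b *: w /\ dualidem e x i *m w' = b *: w'.
Proof.
have [-> | ni2] := eqVneq i 2; first by exists 1; rewrite !scale1r.
exists 0; rewrite !scale0r -E2w -E2w' !mulmxA dualidemM (negbTE ni2).
by rewrite !mul0mx.
Qed.

Lemma Terwilliger_common_eigen {B} : in_Terwilliger e x B ->
  exists b, B *m w = b *: w /\ B *m w' = b *: w'.
Proof.
move/(_ (fun B => exists b, B *m w = b *: w /\ B *m w' = b *: w')).
apply=> [|i _|||a M|M N].
- by exists eta.
- exact: dualidem_common_eigen.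
- by exists 1; rewrite !mul1mx !scale1r.
- move=> M N [b [Mw Mw']] [c [Nw Nw']]; exists (b + c).
  by rewrite !mulmxDl Mw Mw' Nw Nw' !scalerDl.
- by case=> b [Mw Mw']; exists (a * b); rewrite -!scalemxAl Mw Mw' !scalerA.
- move=> [b [Mw Mw']] [c [Nw Nw']]; exists (b * c).
  by rewrite -!mulmxA Nw Nw' -!scalemxAr Mw Mw' !scalerA mulrC.
Qed.

Lemma Tmodule_iso_line_common_eigen : w != 0 -> w' != 0 ->
  Tmodule_iso e x <[w]> <[w']>.
Proof.
move=> nz_w nz_w'; pose sigma u := coord [tuple w] 0 u *: w'.
have sigmaZ k : sigma (k *: w) = k *: w'.
  rewrite /sigma linearZ /= (coord_free 0) ?seq1_free //.
  by rewrite eqxx mulr1.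
have sigma_onto v : v \in <[w']>%VS -> exists2 u, u \in <[w]>%VS & sigma u = v.
  by case/vlineP=> k ->; exists (k *: w); rewrite ?memvZ ?memv_line.
exists sigma; split.
- by move=> _ _ /vlineP[k ->] /vlineP[l ->]; rewrite -scalerDl !sigmaZ scalerDl.
- by move=> a _ /vlineP[k ->]; rewrite scalerA !sigmaZ scalerA.
- by move=> _ /vlineP[k ->]; rewrite sigmaZ memvZ ?memv_line.
- split; last exact: sigma_onto.
  by move=> _ _ /vlineP[k ->] /vlineP[l ->]; rewrite !sigmaZ => /(scalerIv nz_w') ->.
- move=> B TB _ /vlineP[k ->]; have [b [Bw Bw']] := Terwilliger_common_eigen TB.
  by rewrite sigmaZ -!scalemxAr Bw Bw' !scalerA sigmaZ.
Qed.

End CommonEigenvector.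

Lemma Tmodule_iso_line_adj_eigen (w w' : 'cV[Cplx]_#|X|) eta eta' :
  w != 0 -> w' != 0 ->
  adjmx e *m w = eta *: w -> adjmx e *m w' = eta' *: w' ->
  Tmodule_iso e x <[w]> <[w']> -> eta = eta'.
Proof.
move=> nz_w nz_w' Aw Aw' [sigma [_ sigmaZ sigmaW [sigma_inj _] sigmaT]].
have w_w := memv_line w.
have [c sigma_w] := vlineP _ _ (sigmaW w w_w).
have nz_c : c != 0.
  apply: contraNneq nz_w => c0; apply/eqP/sigma_inj; rewrite ?mem0v //.
  by rewrite -(scale0r w) sigmaZ // sigma_w c0 !scale0r.
have := sigmaT _ adjmx_Terwilliger w w_w.
rewrite Aw sigmaZ // sigma_w -scalemxAr Aw' !scalerA => /(scalerIv nz_w').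
by rewrite mulrC => /(mulfI nz_c).
Qed.

End Terwilliger.

Theorem lemma8p4 (X : finType) (e : rel X) (p q : nat) (x : X)
    (W W' : {vspace 'cV[Cplx]_#|X|}) (w w' : 'cV[Cplx]_#|X|) (eta eta' : Cplx) :
  is_AT4_pq2 e p q ->
  irreducible_Tmodule e x W -> has_endpoint e x W 2 ->
  irreducible_Tmodule e x W' -> has_endpoint e x W' 2 ->
  W = <[w]>%VS -> w != 0 ->
  dualidem e x 2 *m adjmx e *m dualidem e x 2 *m w = eta *: w ->
  W' = <[w']>%VS -> w' != 0 ->
  dualidem e x 2 *m adjmx e *m dualidem e x 2 *m w' = eta' *: w' ->
  (Tmodule_iso e x W W' <-> eta = eta').
Proof.
move=> _ [Tw _ _] endw [Tw' _ _] endw' eqW nz_w E2AE2w eqW' nz_w' E2AE2w'.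
subst W W'.
have Aw := endpoint2_line_adj_eigen Tw endw nz_w E2AE2w.
have Aw' := endpoint2_line_adj_eigen Tw' endw' nz_w' E2AE2w'.
split; first exact: Tmodule_iso_line_adj_eigen nz_w nz_w' Aw Aw'.
move=> eq_eta; rewrite -{}eq_eta in Aw'.
have E2w := endpoint2_line_dualidem Tw endw nz_w.
have E2w' := endpoint2_line_dualidem Tw' endw' nz_w'.
exact: Tmodule_iso_line_common_eigen E2w E2w' Aw Aw' nz_w nz_w'.
Qed.
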